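(* Let $\mathfrak{A}$ be an architecture with $|\mathsf{Procs}|=1$ and $\mathsf{DS}=\mathsf{Stacks}$, and let $\Sigma$ be a finite alphabet. For all $k>0$, there is a sentence $\Phi^k_{\mathsf{context}}\in\mathsf{CPDL}(\mathfrak{A},\Sigma)$ of size $\mathcal{O}(k|\mathsf{DS}|^2)$ such that for every CBM $\mathcal{M}$ over $\mathfrak{A}$ and $\Sigma$, $\mathcal{M}\models\Phi^k_{\mathsf{context}}$ if and only if $\mathcal{M}\in\mathsf{Context}_k$.
   Context: With one process $p$ and only stacks $d\in\mathsf{DS}$ (each with $\mathsf{Writer}(d)=\mathsf{Reader}(d)=p$), a CBM (multiply nested word) over $\mathfrak{A},\Sigma$ is $\mathcal{M}=(a_1\cdots a_n,(\rhd^d)_{d\in\mathsf{DS}})$ with events $\mathcal{E}=\{1,\dots,n\}$, labels $\lambda(i)=a_i$, process successor $i\to i+1$, and $\rhd^d\subseteq\mathcal{E}^2$ such that distinct edges (over all $d$) have four distinct endpoints, $<=(\to\cup\bigcup_d\rhd^d)^+$ is a strict partial order (so every edge goes forward), and each stack is LIFO: $e_1\rhd^d f_1$, $e_2\rhd^d f_2$, $e_1<e_2<f_1$ imply $f_2<f_1$. A context of $\mathcal{M}$ is a possibly empty interval $I=\{e,e+1,\dots,f\}\subseteq\mathcal{E}$ such that whenever $(i,j)\in\rhd^d$ and $(i',j')\in\rhd^{d'}$ with $I\cap\{i,j\}\ne\emptyset$ and $I\cap\{i',j'\}\ne\emptyset$, then $d=d'$. $\mathcal{M}$ is $k$-context-bounded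 if $\mathcal{E}=I_1\cup\dots\cup I_k$ for some contexts $I_1,\dots,I_k$; $\mathsf{Context}_k$ is the set of $k$-context-bounded CBMs. $\mathsf{CPDL}(\mathfrak{A},\Sigma)$ has atomic propositions $\mathsf{Procs}\cup\Sigma$ and atomic programs $\{\to\}\cup\mathsf{DS}$: sentences $\Phi::=\mathsf{E}\sigma\mid\Phi\vee\Phi\mid\neg\Phi$; state formulas $\sigma::=q\mid\sigma\vee\sigma\mid\neg\sigma\mid\langle\pi\rangle\sigma$; path formulas $\pi::=\gamma\mid\mathsf{test}(\sigma)\mid\pi+\pi\mid\pi\cdot\pi\mid\pi^*\mid\pi^{-1}$. Over a CBM, $q$ holds at $e$ iff $q$ is $\lambda(e)$ or the process of $e$; $\to$ denotes process successor and $d$ denotes $\rhd^d$; $\langle\pi\rangle\sigma$ holds at $e$ iff some $f$ with $(e,f)\in[\![\pi]\!]$ satisfies $\sigma$; $\mathsf{test}(\sigma)$ is the identity on $[\![\sigma]\!]$; $+,\cdot,^*,^{-1}$ are union, composition, reflexive-transitive closure and converse; $\mathsf{E}\sigma$ holds iff some event satisfies $\sigma$. Size is formula length. *)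

From Stdlib Require Import Relations.
From mathcomp Require Import all_boot.
Set Implicit Arguments.
Unset Strict Implicit.
Unset Printing Implicit Defensive.

(* Architecture with a single process p and data structures DS = Stacks
   (each stack written and read by p).  DS and the alphabet Sigma are finTypes. *)

Section CBM.
Variables (DS Sigma : finType).

(* A CBM (multiply nested word): events are 0,...,n-1 with n = size word
   (the paper's 1..n shifted by one); edge d i j means i |>^d j. *)
Record cbm := CBM { word : seq Sigma; edge : DS -> rel nat }.

Definition nev (M : cbm) : nat := size (word M).

Definition step (M : cbm) (e f : nat) : Prop :=
  (f = e.+1 /\ f < nev M) \/ exists d, edge M d e f.

Definition wf_cbm (M : cbm) : Prop :=
  (forall d i j, edge M d i j -> i < nev M /\ j < nev M) /\
  (forall d d' i j i' j', edge M d i j -> edge M d' i' j' ->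
      (d, i, j) <> (d', i', j') -> uniq [:: i; j; i'; j']) /\
  (* < = (-> U U_d |>^d)^+ is a strict partial order (irreflexive) *)
  (forall e, ~ clos_trans nat (step M) e e) /\
  (* LIFO *)
  (forall d e1 f1 e2 f2, edge M d e1 f1 -> edge M d e2 f2 ->
      e1 < e2 -> e2 < f1 -> f2 < f1).

Definition in_itv (lo hi x : nat) : bool := (lo <= x) && (x < hi).

Definition is_context (M : cbm) (lo hi : nat) : Prop :=
  hi <= nev M /\
  forall d d' i j i' j', edge M d i j -> edge M d' i' j' ->
    (in_itv lo hi i || in_itv lo hi j) ->
    (in_itv lo hi i' || in_itv lo hi j') -> d = d'.

Definition context_bounded (k : nat) (M : cbm) : Prop :=
  exists I : 'I_k -> nat * nat,
    (forall i, is_context M (I i).1 (I i).2) /\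
    (forall e, e < nev M -> exists i, in_itv (I i).1 (I i).2 e).

(* CPDL(A, Sigma): atomic propositions Procs U Sigma (Procs = {p}),
   atomic programs {->} U DS. *)
Inductive sform : Type :=
  | SProc : sform
  | SLab : Sigma -> sform
  | SOr : sform -> sform -> sform
  | SNot : sform -> sform
  | SDia : pform -> sform -> sform
with pform : Type :=
  | PNext : pform
  | PStack : DS -> pform
  | PTest : sform -> pform
  | PPlus : pform -> pform -> pform
  | PComp : pform -> pform -> pform
  | PStar : pform -> pform
  | PConv : pform -> pform.

Inductive sentence : Type :=
  | EE : sform -> sentence
  | EOr : sentence -> sentence -> sentence
  | ENot : sentence -> sentence.

Fixpoint ssize (s : sform) : nat :=
  match s with
  | SProc => 1
  | SLab _ => 1
  | SOr s1 s2 => (ssize s1 + ssize s2).+1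
  | SNot s1 => (ssize s1).+1
  | SDia p s1 => (psize p + ssize s1).+1
  end
with psize (p : pform) : nat :=
  match p with
  | PNext => 1
  | PStack _ => 1
  | PTest s => (ssize s).+1
  | PPlus p1 p2 => (psize p1 + psize p2).+1
  | PComp p1 p2 => (psize p1 + psize p2).+1
  | PStar p1 => (psize p1).+1
  | PConv p1 => (psize p1).+1
  end.

Fixpoint sentsize (F : sentence) : nat :=
  match F with
  | EE s => (ssize s).+1
  | EOr F1 F2 => (sentsize F1 + sentsize F2).+1
  | ENot F1 => (sentsize F1).+1
  end.

(* Semantics over a CBM; all denotations are included in the event set
   (resp. its square). *)
Fixpoint sem_s (M : cbm) (s : sform) (e : nat) {struct s} : Prop :=
  match s with
  | SProc => e < nev M
  | SLab a => onth (word M) e = Some a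
  | SOr s1 s2 => sem_s M s1 e \/ sem_s M s2 e
  | SNot s1 => e < nev M /\ ~ sem_s M s1 e
  | SDia p s1 => exists f, sem_p M p e f /\ sem_s M s1 f
  end
with sem_p (M : cbm) (p : pform) (e f : nat) {struct p} : Prop :=
  match p with
  | PNext => f = e.+1 /\ f < nev M
  | PStack d => edge M d e f
  | PTest s => e = f /\ sem_s M s e
  | PPlus p1 p2 => sem_p M p1 e f \/ sem_p M p2 e f
  | PComp p1 p2 => exists g, sem_p M p1 e g /\ sem_p M p2 g f
  | PStar p1 => (e = f /\ e < nev M) \/ clos_trans nat (sem_p M p1) e f
  | PConv p1 => sem_p M p1 f e
  end.

Fixpoint models (M : cbm) (F : sentence) : Prop :=
  match F with
  | EE s => exists e, e < nev M /\ sem_s M s e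
  | EOr F1 F2 => models M F1 \/ models M F2
  | ENot F1 => ~ models M F1
  end.

End CBM.

From Stdlib Require Import Relations Classical Wf_nat.
From mathcomp Require Import all_boot zify.
Set Implicit Arguments. Unset Strict Implicit. Unset Printing Implicit Defensive.

(* Since distinct edges have distinct endpoints, every event is an endpoint
   of edges of at most one stack, its type.  Call typed events e < f of
   different types a switch.  A context contains no switch, so, contexts being
   intervals, k contexts cannot cover a chain e_0 < ... < e_k of k consecutive
   switches: the context containing e_0 misses e_1 and everything after it.
   Conversely, if there is no such chain, cutting greedily at the right end of
   the first switch yields k contexts covering all events.  The chain is
   expressed by <pi>^k true, where pi is the sum over the |DS|^2 pairs of
   distinct stacks d, d' of  test(d-event) ; ->^+ ; test(d'-event). *)

Arguments SProc {DS Sigma}.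
Arguments SOr {DS Sigma}.
Arguments SNot {DS Sigma}.
Arguments SDia {DS Sigma}.
Arguments PNext {DS Sigma}.
Arguments PStack {DS Sigma}.
Arguments PTest {DS Sigma}.
Arguments PPlus {DS Sigma}.
Arguments PComp {DS Sigma}.
Arguments PStar {DS Sigma}.
Arguments PConv {DS Sigma}.
Arguments EE {DS Sigma}.
Arguments ENot {DS Sigma}.

Lemma ex_minn_classic (P : nat -> Prop) :
  (exists n, P n) -> exists n, P n /\ forall m, m < n -> ~ P m.
Proof.
move=> exP; have [n [[Pn least] _]] :=
  dec_inh_nat_subset_has_unique_least_element P (fun n => classic (P n)) exP.
by exists n; split=> // m lt_mn /least /leP; rewrite leqNgt lt_mn.
Qed.

Section Formula.
Variables (DS Sigma : finType).
Notation sf := (sform DS Sigma).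
Notation pf := (pform DS Sigma).

Definition endpointF (d : DS) : sf :=
  SOr (SDia (PStack d) SProc) (SDia (PConv (PStack d)) SProc).

Definition pfalse : pf := PTest (SNot SProc).

Definition PBig (I : Type) (s : seq I) (F : I -> pf) : pf :=
  foldr (fun i p => PPlus (F i) p) pfalse s.

Definition switchStepP (d d' : DS) : pf :=
  PComp (PTest (endpointF d))
    (PComp PNext (PComp (PStar PNext) (PTest (endpointF d')))).

Definition switchP : pf :=
  PBig [seq p <- enum {: DS * DS} | p.1 != p.2] (fun p => switchStepP p.1 p.2).

Definition switchesF (j : nat) : sf := iter j (SDia switchP) SProc.

Definition PhiContext (k : nat) : sentence DS Sigma := ENot (EE (switchesF k)).

Lemma psize_PBig (I : Type) (s : seq I) (F : I -> pf) (c : nat) :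
  (forall i, psize (F i) <= c) -> psize (PBig s F) <= c.+1 * size s + 3.
Proof. by move=> leFc; elim: s => [|i s IH] /=; [lia | have := leFc i; lia]. Qed.

Lemma psize_switchP : psize switchP <= 25 * #|DS| ^ 2 + 3.
Proof.
have size_pairs : size [seq p <- enum {: DS * DS} | p.1 != p.2] <= #|DS| ^ 2.
  by rewrite size_filter (leq_trans (count_size _ _)) // -cardT card_prod mulnn.
have := @psize_PBig _ [seq p <- enum {: DS * DS} | p.1 != p.2]
  (fun p => switchStepP p.1 p.2) 24 (fun _ => leqnn _).
rewrite -/switchP; nia.
Qed.

Lemma ssize_switchesF (j : nat) : ssize (switchesF j) = j * (psize switchP).+1 + 1.
Proof. by elim: j => [|j IH] //=; rewrite IH; lia. Qed.

Lemma sentsize_PhiContext (k : nat) :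
  0 < k -> sentsize (PhiContext k) <= 32 * k * #|DS|.+1 ^ 2.
Proof.
move=> k_gt0; rewrite /= ssize_switchesF.
have := psize_switchP; set D := #|DS|; set q := psize switchP; nia.
Qed.

End Formula.

Section Switches.
Variables (DS Sigma : finType) (M : cbm DS Sigma).
Hypothesis wfM : wf_cbm M.

Definition endpoint (d : DS) (e : nat) : Prop :=
  (exists f, edge M d e f) \/ (exists f, edge M d f e).

Lemma endpoint_lt (d : DS) (e : nat) : endpoint d e -> e < nev M.
Proof.
have [edge_lt _] := wfM.
by case=> [[f /edge_lt []]|[f /edge_lt []]].
Qed.

Lemma edge_share (d d' : DS) (i j i' j' : nat) :
  edge M d i j -> edge M d' i' j' -> [|| i == i', i == j', j == i' | j == j'] ->
  d = d'.
Proof.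
move=> Eij Eij' shared; have [_ [distinct _]] := wfM.
case: (eqVneq (d, i, j) (d', i', j')) => [[]//|/eqP neq].
move: (distinct _ _ _ _ _ _ Eij Eij' neq) shared.
rewrite /= !inE !negb_or => /and4P [/and3P [_ ii' ij'] /andP [ji' jj'] _ _].
by rewrite (negbTE ii') (negbTE ij') (negbTE ji') (negbTE jj').
Qed.

Lemma endpoint_uniq (d d' : DS) (e : nat) : endpoint d e -> endpoint d' e -> d = d'.
Proof.
by case=> [[f E]|[f E]] [[f' E']|[f' E']]; apply: (edge_share E E'); rewrite eqxx ?orbT.
Qed.

Lemma sem_endpointF (d : DS) (e : nat) : sem_s M (endpointF Sigma d) e <-> endpoint d e.
Proof.
have [edge_lt _] := wfM; split.
  by case=> [[f [E _]]|[f [E _]]]; [left|right]; exists f.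
by case=> [[f E]|[f E]]; [left|right]; exists f; case: (edge_lt _ _ _ E).
Qed.

Lemma sem_star_next (e f : nat) :
  sem_p M (PStar PNext) e f <-> e <= f /\ f < nev M.
Proof.
split=> /=.
  case=> [[-> //]|]; elim=> [x y [-> //]|x y z _ [? ?] _ [? ?]]; lia.
move=> [le_ef lt_f]; case: (eqVneq e f) => [-> | ne_ef]; [by left | right].
have [n def_f] : exists n, f = e + n.+1 by exists (f - e).-1; lia.
subst f; elim: n lt_f {le_ef ne_ef} => [|n IH] lt_f.
  by apply: t_step; split=> //; lia.
by apply: (t_trans _ _ _ (e + n.+1)); [apply: IH | apply: t_step; split]; lia.
Qed.

Lemma sem_switchStepP (d d' : DS) (e f : nat) :
  sem_p M (switchStepP Sigma d d') e f <-> [/\ e < f, endpoint d e & endpoint d' f].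
Proof.
rewrite /switchStepP /=; split.
  move=> [g [[<- /sem_endpointF Ed] [h [[-> _] [g' [/sem_star_next [? _] Ef']]]]]].
  by case: Ef' => <- /sem_endpointF Ef.
move=> [lt_ef Ed Ef].
exists e; split; first by split=> //; apply/sem_endpointF.
exists e.+1; split; first by split=> //; have := endpoint_lt Ef; lia.
exists f; split; first by apply/sem_star_next; have := endpoint_lt Ef.
by split=> //; apply/sem_endpointF.
Qed.

Lemma sem_PBig (I : eqType) (s : seq I) (F : I -> pform DS Sigma) (e f : nat) :
  sem_p M (PBig s F) e f <-> exists2 i, i \in s & sem_p M (F i) e f.
Proof.
elim: s => [|i s IH] /=; first by split=> [[_ []] | []].
rewrite IH; split.
  case=> [Fi | [i' s_i' Fi']]; first by exists i; rewrite ?mem_head.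
  by exists i'; rewrite ?inE ?s_i' ?orbT.
by move=> [i']; rewrite inE => /orP [/eqP -> | s_i'] Fi'; [left | right; exists i'].
Qed.

Lemma sem_switchP (e f : nat) :
  sem_p M (switchP DS Sigma) e f <->
  exists d d', [/\ d != d', e < f, endpoint d e & endpoint d' f].
Proof.
rewrite sem_PBig; split.
  by move=> [[d d']]; rewrite mem_filter /= => /andP [ne _] /sem_switchStepP [];
    exists d, d'.
move=> [d [d' [ne lt_ef Ed Ef]]]; exists (d, d'); first by rewrite mem_filter ne mem_enum.
exact/sem_switchStepP.
Qed.

Fixpoint switches (j : nat) (e : nat) : Prop :=
  match j with
  | 0 => e < nev M
  | j.+1 => exists f d d', [/\ d != d', e < f, endpoint d e, endpoint d' f & switches j f]
  end.

Lemma sem_switchesF (j : nat) (e : nat) : sem_s M (switchesF DS Sigma j) e <-> switches j e.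
Proof.
elim: j e => [|j IH] e //=; split.
  by move=> [f [/sem_switchP [d [d' [? ? ? ?]]] /IH ?]]; exists f, d, d'.
move=> [f [d [d' [ne lt_ef Ed Ef sw]]]]; exists f; split; last exact/IH.
by apply/sem_switchP; exists d, d'.
Qed.

Lemma switches_lt (j : nat) (e : nat) : switches j e -> e < nev M.
Proof. by case: j => [//|j] [f [d [d' [_ _ Ed _ _]]]]; exact: endpoint_lt Ed. Qed.

Lemma is_context_endpointP (lo hi : nat) :
  is_context M lo hi <->
  hi <= nev M /\ forall a b d d', in_itv lo hi a -> in_itv lo hi b ->
    endpoint d a -> endpoint d' b -> d = d'.
Proof.
split=> [[le_hi ctx] | [le_hi ctx]]; split=> //.
  move=> a b d d' Ia Ib [[f E]|[f E]] [[g E']|[g E']];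
    by apply: (ctx _ _ _ _ _ _ E E'); rewrite ?Ia ?Ib ?orbT.
move=> d d' i j i' j' E E' /orP I /orP I'.
case: I => I; case: I' => I'; apply: (ctx _ _ _ _ I I').
all: by [left; eexists; exact: E | right; eexists; exact: E
        | left; eexists; exact: E' | right; eexists; exact: E'].
Qed.

Definition covers (s : seq (nat * nat)) (lo : nat) : Prop :=
  forall x, lo <= x -> x < nev M -> exists2 I, I \in s & in_itv I.1 I.2 x.

Definition all_contexts (s : seq (nat * nat)) : Prop :=
  {in s, forall I, is_context M I.1 I.2}.

Lemma context_bounded_cover (k : nat) :
  context_bounded k M <-> exists s, [/\ size s <= k, all_contexts s & covers s 0].
Proof.
split=> [[I [ctxI covI]] | [s [size_s ctx_s cov_s]]].
  exists [seq I i | i <- enum 'I_k]; split.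
  - by rewrite size_map size_enum_ord.
  - by move=> _ /mapP [i _ ->].
  - by move=> x _ /covI [i xi]; exists (I i); rewrite ?map_f ?mem_enum.
exists (fun i : 'I_k => nth (0, 0) s i); split.
  move=> i; case: (ltnP i (size s)) => [lt_is | le_si].
    exact/ctx_s/mem_nth.
  by rewrite nth_default //; split=> // *; exact: leq0n.
move=> x /(cov_s x (leq0n x)) [I s_I xI].
have lt_Ik : index I s < k by apply: leq_trans size_s; rewrite index_mem.
by exists (Ordinal lt_Ik); rewrite /= nth_index.
Qed.

Lemma switches_lt_size (j : nat) (e : nat) (s : seq (nat * nat)) :
  switches j e -> all_contexts s -> covers s e -> j < size s.
Proof.
elim: j e s => [|j IH] e s /=.
  by move=> lt_e _ /(_ e (leqnn e) lt_e) [I]; case: s.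
move=> [f [d [d' [ne lt_ef Ed Ef sw]]]] ctx cov.
have [I s_I eI] := cov e (leqnn e) (endpoint_lt Ed).
have fI : ~~ in_itv I.1 I.2 f.
  apply/negP=> fI; move/eqP: ne; apply.
  have [_ same_type] := (is_context_endpointP I.1 I.2).1 (ctx I s_I).
  exact: same_type eI fI Ed Ef.
have le_If : I.2 <= f by move: eI fI; rewrite /in_itv; lia.
rewrite -ltn_predRL -(size_rem s_I); apply: IH sw _ _.
  by move=> J /mem_rem /ctx.
move=> x le_fx lt_x; have [J s_J xJ] := cov x (leq_trans (ltnW lt_ef) le_fx) lt_x.
exists J => //; apply: rem_mem s_J; apply/eqP=> JI; subst J.
by move: xJ; rewrite /in_itv; lia.
Qed.

Definition switch_end (lo y : nat) : Prop :=
  exists w d d', [/\ lo <= w, w < y, d != d', endpoint d w & endpoint d' y].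

Lemma context_of_no_switch_end (lo hi : nat) :
  hi <= nev M -> (forall y, y < hi -> ~ switch_end lo y) -> is_context M lo hi.
Proof.
move=> le_hi no_end; apply/is_context_endpointP; split=> // a b d d'.
move=> /andP [le_a lt_a] /andP [le_b lt_b] Ea Eb.
case: (eqVneq d d') => // ne; case: (ltngtP a b) => [lt_ab | lt_ba | eq_ab].
- by case: (no_end b lt_b); exists a, d, d'.
- by case: (no_end a lt_a); exists b, d', d; rewrite eq_sym.
- by move/eqP: ne; subst; case; exact: endpoint_uniq Ea Eb.
Qed.

Lemma switches_succ_of_switch (j : nat) (w h x : nat) (d d' : DS) :
  w < h -> d != d' -> endpoint d w -> endpoint d' h -> h <= x -> switches j x ->
  switches j.+1 w \/ switches j.+1 h.
Proof.
move=> lt_wh ne Ew Eh le_hx.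
case: j => [_ | j sw]; first by left; exists h, d, d'; split=> //; exact: endpoint_lt Eh.
have [f [c [c' [ne_c _ Ex _ _]]]] := sw.
case: (eqVneq c d) => [eq_cd | ne_cd]; last first.
  by left; exists x, d, c; split=> //; [rewrite eq_sym | lia].
subst c; right; exists x, d', d; split=> //; first by rewrite eq_sym.
rewrite ltn_neqAle le_hx andbT; apply/eqP=> eq_hx; subst x.
by move/eqP: ne; apply; exact: endpoint_uniq Ex Eh.
Qed.

Lemma cover_of_no_switches (j lo : nat) :
  (forall x, lo <= x -> ~ switches j x) ->
  exists s, [/\ size s <= j, all_contexts s & covers s lo].
Proof.
elim: j lo => [|j IH] lo no_sw.
  by exists [::]; split=> // x le_x lt_x; case: (no_sw x le_x lt_x).
case: (classic (exists y, switch_end lo y))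
  => [/ex_minn_classic [hi [[w [d [d' [le_w lt_wh ne Ew Eh]]]] least]] | no_end].
  have lt_hi := endpoint_lt Eh.
  have no_sw' : forall x, hi <= x -> ~ switches j x.
    move=> x le_hx /(switches_succ_of_switch lt_wh ne Ew Eh le_hx) [] /no_sw; apply=> //.
    exact: ltnW (leq_ltn_trans le_w lt_wh).
  have [s [size_s ctx_s cov_s]] := IH hi no_sw'.
  exists ((lo, hi) :: s); split=> //.
  - move=> I; rewrite inE => /orP [/eqP -> | /ctx_s //].
    exact: context_of_no_switch_end (ltnW lt_hi) least.
  - move=> x le_x lt_x; case: (ltnP x hi) => [lt_xh | le_hx].
      by exists (lo, hi); rewrite ?mem_head // /in_itv le_x lt_xh.
    by have [I s_I xI] := cov_s x le_hx lt_x; exists I; rewrite // inE s_I orbT.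
exists [:: (lo, nev M)]; split=> //.
- move=> I; rewrite inE => /eqP -> /=; apply: context_of_no_switch_end => // y _ ey.
  by apply: no_end; exists y.
- by move=> x le_x lt_x; exists (lo, nev M); rewrite ?mem_head // /in_itv le_x lt_x.
Qed.

Lemma context_bounded_switchesP (k : nat) :
  context_bounded k M <-> ~ exists e, switches k e.
Proof.
rewrite context_bounded_cover; split.
  move=> [s [size_s ctx_s cov_s]] [e sw].
  have := switches_lt_size sw ctx_s (fun x _ => cov_s x (leq0n x)).
  by rewrite ltnNge size_s.
by move=> no_sw; apply: cover_of_no_switches => x _ sw; apply: no_sw; exists x.
Qed.

End Switches.

Theorem mainTheorem18 :
  exists C : nat,
    forall (DS Sigma : finType) (k : nat), 0 < k ->
      exists Phi : sentence DS Sigma,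
        sentsize Phi <= C * k * (#|DS|.+1) ^ 2 /\
        forall M : cbm DS Sigma, wf_cbm M ->
          (models M Phi <-> context_bounded k M).
Proof.
exists 32 => DS Sigma k k_gt0; exists (PhiContext DS Sigma k).
split; first exact: sentsize_PhiContext.
move=> M wfM; rewrite (context_bounded_switchesP wfM) /=.
split=> no_sw [e sw]; apply: no_sw; exists e.
  by split; [exact: switches_lt sw | exact/(sem_switchesF wfM)].
by move: sw => [_ /(sem_switchesF wfM)].
Qed.
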